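(* Let $p$ be a prime, $m\ge1$ with $p>m$, and $1\le k\le m$. Let $E_k(x)=\exp\big(\sum_{i=0}^k\frac{x^{p^i}}{p^i}\big)$, let $\pi_k\in\mathbb{C}_p$ be a root of $\sum_{i=0}^k\frac{x^{p^i}}{p^i}=0$ with $\mathrm{ord}_p\,\pi_k=\frac{1}{p^{k-1}(p-1)}$, $\theta_k(x)=E_k(\pi_kx)$ and $\hat\theta_k(x)=\prod_{j=0}^\infty\theta_k(x^{p^j})$. For $0\le j\le k-1$ let $\gamma_{kj}=\sum_{i=0}^j\frac{\pi_k^{p^i}}{p^i}$. Then $$\hat\theta_k(x)=\exp\Big(\sum_{j=0}^{k-1}\gamma_{kj}x^{p^j}\Big),$$ and $\mathrm{ord}_p\,\gamma_{kj}=\frac{1}{p^{k-1-j}(p-1)}-j$.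
   Context: $\mathrm{ord}_p$ is the $p$-adic valuation on $\mathbb{C}_p$ with $\mathrm{ord}_p(p)=1$. *)

(* Formal power series over a field K are coefficient
   sequences nat -> K; C_p is modelled abstractly. *)
From HB Require Import structures.
From mathcomp Require Import all_boot all_order all_algebra.
Set Implicit Arguments. Unset Strict Implicit. Unset Printing Implicit Defensive.
Import Order.TTheory GRing.Theory Num.Theory.
Local Open Scope ring_scope.

Definition pseries (K : Type) := nat -> K.

Section PS.
Variable K : fieldType.

Definition ps1 : pseries K := fun n => if n == 0%N then 1 else 0.
Definition psmul (f g : pseries K) : pseries K :=
  fun n => \sum_(i < n.+1) f i * g (n - i)%N.
Definition pspow (f : pseries K) (m : nat) : pseries K := iter m (psmul f) ps1.
(* exp(f) = sum_m f^m/m!, for f with zero constant term (then f^m = O(x^m),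
   so the coefficient of x^n only receives contributions from m <= n) *)
Definition psexp (f : pseries K) : pseries K :=
  fun n => \sum_(m < n.+1) pspow f m n / (m`!)%:R.
Definition psscale (a : K) (f : pseries K) : pseries K := fun n => a ^+ n * f n.
Definition pssubst_pow (d : nat) (f : pseries K) : pseries K :=
  fun n => if (d %| n)%N then f (n %/ d)%N else 0.
Definition xadic_limit (u : nat -> pseries K) (g : pseries K) : Prop :=
  forall N, exists J0, forall J, (J0 <= J)%N ->
    forall n, (n <= N)%N -> u J n = g n.

Definition logE (p k : nat) : pseries K :=
  fun n => \sum_(i < k.+1) (if n == (p ^ i)%N then ((p ^ i)%:R)^-1 else 0).
Definition Ek (p k : nat) : pseries K := psexp (logE p k).
Definition theta (p k : nat) (pi : K) : pseries K := psscale pi (Ek p k).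
Definition theta_hat_partial (p k : nat) (pi : K) (J : nat) : pseries K :=
  \big[psmul/ps1]_(j < J) pssubst_pow (p ^ j) (theta p k pi).
Definition gamma (p : nat) (pi : K) (j : nat) : K :=
  \sum_(i < j.+1) pi ^+ (p ^ i) / (p ^ i)%:R.

Definition is_ord_p (p : nat) (ord : K -> rat) : Prop :=
  [/\ forall x y, x != 0 -> y != 0 -> ord (x * y) = ord x + ord y,
      forall x y, x != 0 -> y != 0 -> x + y != 0 ->
        Num.min (ord x) (ord y) <= ord (x + y)
    & ord (p%:R) = 1].
End PS.

(* Truncating at degree N turns power series into polynomials, on which
   exp_N(P) = \sum_(m <= N) P^m / m! satisfies exp_N(P + Q) = exp_N(P) exp_N(Q)
   up to degree N when P, Q have no constant term (binomial theorem, char 0),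
   and commutes with the substitutions x -> a x and x -> x^d.  Hence
   \prod_(j < J) theta_k(x^(p^j)) = exp(\sum_(j < J) \sum_(i <= k) pi^(p^i) x^(p^(i+j)) / p^i),
   whose coefficient at x^(p^t), t < J, is \sum_(i <= min(t, k)) pi^(p^i) / p^i:
   this is gamma_kt for t < k, and 0 for t >= k because pi is a root of
   \sum_(i <= k) x^(p^i) / p^i.  For the valuations, ord(pi^(p^i) / p^i) =
   1 / (p^(k-1-i) (p - 1)) - i strictly decreases for i < k, so the last term of
   gamma_kj determines its valuation. *)

From HB Require Import structures.
From mathcomp Require Import all_boot all_order all_algebra.
From mathcomp Require Import zify ring lra.
Import Order.TTheory GRing.Theory Num.Theory.
Local Open Scope ring_scope.
Set Implicit Arguments. Unset Strict Implicit.

Lemma sum_antidiagonals (V : nmodType) N (c : nat -> nat -> V) :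
  (forall a b, (N < a + b)%N -> c a b = 0) ->
  \sum_(m < N.+1) \sum_(i < m.+1) c (m - i)%N i = \sum_(a < N.+1) \sum_(b < N.+1) c a b.
Proof.
move=> c0.
under eq_bigr => m _ do
  rewrite (big_ord_widen N.+1 (fun i => c (m - i)%N i) (ltn_ord m)) big_mkcond /=.
rewrite exchange_big /= [RHS]exchange_big /=; apply: eq_bigr => i _.
rewrite -(big_mkcond (fun m : 'I_N.+1 => (i < m.+1)%N)) /=.
rewrite -(big_mkord (fun m => (i < m.+1)%N) (fun m => c (m - i)%N i)).
rewrite -(big_mkord xpredT (fun a => c a i)).
rewrite (eq_bigl (fun m => true && (i <= m)%N)) //.
rewrite -big_nat_widenl // -{1}(add0n i) big_addn.
under eq_bigr => a _ do rewrite addnK.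
rewrite (big_cat_nat (leq0n (N.+1 - i)) (leq_subr i N.+1)) /=.
rewrite [X in _ = _ + X]big1_seq ?addr0 // => a /andP[_].
by rewrite mem_index_iota => /andP[? ?]; apply: c0; lia.
Qed.

Lemma sum_if_eq_addn (V : nmodType) (x : V) J t i : (t < J)%N ->
  \sum_(j < J) (if t == (j + i)%N then x else 0) = if (i <= t)%N then x else 0.
Proof.
move=> tJ; case: (leqP i t) => it; last first.
  by rewrite big1 // => j _; rewrite ifF //; apply/eqP; lia.
rewrite (eq_bigr (fun j : 'I_J => if j == (t - i)%N :> nat then x else 0)) => [|j _].
  by rewrite -big_mkcond big_ord1_eq ifT //; lia.
by congr (if _ then _ else _); apply/eqP/eqP; lia.
Qed.

Section PowerSeries.
Variable K : fieldType.
Implicit Types (f g : pseries K) (P Q q : {poly K}).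

Definition ps_of_poly P : pseries K := fun i => P`_i.
Definition ps_trunc N f : {poly K} := \poly_(i < N.+1) f i.
Definition eq_upto N f g := forall i, (i <= N)%N -> f i = g i.

Lemma eq_upto_trans N f g h : eq_upto N f g -> eq_upto N g h -> eq_upto N f h.
Proof. by move=> fg gh i iN; rewrite fg ?gh. Qed.

Lemma eq_upto_trunc N f : eq_upto N f (ps_of_poly (ps_trunc N f)).
Proof. by move=> i iN; rewrite /ps_of_poly coef_poly ltnS iN. Qed.

Lemma psmul_eq_upto N f f' g g' :
  eq_upto N f f' -> eq_upto N g g' -> eq_upto N (psmul f g) (psmul f' g').
Proof.
move=> ff' gg' n nN; apply: eq_bigr => i _.
have le_in : (i <= n)%N by rewrite -ltnS.
by rewrite ff' ?gg' //; [apply: leq_trans (leq_subr _ _) nN | apply: leq_trans nN].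
Qed.

Lemma pspow_eq_upto N f g m : eq_upto N f g -> eq_upto N (pspow f m) (pspow g m).
Proof.
move=> fg; elim: m => [|m IH] //.
by rewrite /pspow !iterS; apply: psmul_eq_upto.
Qed.

Lemma psexp_eq_upto N f g : eq_upto N f g -> eq_upto N (psexp f) (psexp g).
Proof.
move=> fg n nN; apply: eq_bigr => m _.
by rewrite (pspow_eq_upto m fg).
Qed.

Lemma psmul_poly P Q : psmul (ps_of_poly P) (ps_of_poly Q) =1 ps_of_poly (P * Q).
Proof. by move=> n; rewrite /ps_of_poly coefM. Qed.

Lemma pspow_poly P m : pspow (ps_of_poly P) m =1 ps_of_poly (P ^+ m).
Proof.
elim: m => [|m IH] n.
  by rewrite /ps_of_poly expr0 coef1 /pspow /= /ps1; case: (n == 0%N); rewrite ?mulr1n ?mulr0n.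
rewrite /pspow iterS -/(pspow _ m) exprS -psmul_poly.
by apply: eq_bigr => i _; rewrite IH.
Qed.

Lemma drop_polyMX P : P`_0 = 0 -> drop_poly 1 P * 'X = P.
Proof.
move=> P0; rewrite -[RHS](poly_take_drop 1) expr1 -[LHS]add0r; congr (_ + _).
by apply/polyP => j; rewrite coef_take_poly coef0; case: j.
Qed.

Lemma coef_pow_lt P m i : P`_0 = 0 -> (i < m)%N -> (P ^+ m)`_i = 0.
Proof. by move=> P0 im; rewrite -(drop_polyMX P0) exprMn coefMXn im. Qed.

Definition exp_upto N P : {poly K} := \sum_(m < N.+1) ((m`!)%:R)^-1 *: P ^+ m.

Lemma psexp_poly N P :
  P`_0 = 0 -> eq_upto N (psexp (ps_of_poly P)) (ps_of_poly (exp_upto N P)).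
Proof.
move=> P0 i iN; rewrite /psexp /ps_of_poly /exp_upto coef_sum.
rewrite (big_ord_widen N.+1 (fun m => pspow _ m i / (m`!)%:R)) ?ltnS //.
rewrite big_mkcond; apply: eq_bigr => m _; rewrite coefZ pspow_poly /ps_of_poly.
case: (ltnP m i.+1) => [_|im]; first by rewrite mulrC.
by rewrite coef_pow_lt ?mulr0.
Qed.

Lemma coef0_comp P q : q`_0 = 0 -> (P \Po q)`_0 = P`_0.
Proof. by move=> q0; rewrite -!horner_coef0 horner_comp [q.[0]]horner_coef0 q0. Qed.

Lemma exp_upto_comp N P q : exp_upto N P \Po q = exp_upto N (P \Po q).
Proof.
rewrite /exp_upto (rmorph_sum (comp_poly q)); apply: eq_bigr => m _.
by rewrite /= comp_polyZ (rmorphXn (comp_poly q)).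
Qed.

Lemma psexp_comp (F : pseries K -> pseries K) q :
  q`_0 = 0 ->
  (forall N f g, eq_upto N f g -> eq_upto N (F f) (F g)) ->
  (forall P, F (ps_of_poly P) =1 ps_of_poly (P \Po q)) ->
  forall f, f 0%N = 0 -> F (psexp f) =1 psexp (F f).
Proof.
move=> q0 F_eq F_poly f f0 n; set P := ps_trunc n f.
have fP := eq_upto_trunc (N:=n) f.
have P0 : P`_0 = 0 by rewrite -[LHS]fP.
have Pq0 : (P \Po q)`_0 = 0 by rewrite coef0_comp.
have lhs : eq_upto n (F (psexp f)) (ps_of_poly (exp_upto n P \Po q)).
  apply: eq_upto_trans (F_eq _ _ _ (eq_upto_trans (psexp_eq_upto fP) (psexp_poly (N:=n) P0))) _.
  by move=> i _; apply: F_poly.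
have rhs : eq_upto n (psexp (F f)) (ps_of_poly (exp_upto n (P \Po q))).
  apply: eq_upto_trans (psexp_eq_upto (F_eq _ _ _ fP)) _.
  apply: eq_upto_trans (psexp_poly (N:=n) Pq0).
  by apply: psexp_eq_upto => i _; apply: F_poly.
by rewrite lhs // rhs // exp_upto_comp.
Qed.

Lemma pssubst_pow_eq_upto d N f g :
  eq_upto N f g -> eq_upto N (pssubst_pow d f) (pssubst_pow d g).
Proof.
move=> fg n nN; rewrite /pssubst_pow; case: ifP => // _.
by rewrite fg // (leq_trans (leq_div _ _) nN).
Qed.

Lemma pssubst_pow_poly d P :
  (0 < d)%N -> pssubst_pow d (ps_of_poly P) =1 ps_of_poly (P \Po 'X^d).
Proof. by move=> d_gt0 n; rewrite /ps_of_poly coef_comp_poly_Xn. Qed.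

Lemma psscale_eq_upto a N f g : eq_upto N f g -> eq_upto N (psscale a f) (psscale a g).
Proof. by move=> fg n nN; rewrite /psscale fg. Qed.

Lemma coef_comp_scaleX P a i : (P \Po (a *: 'X))`_i = a ^+ i * P`_i.
Proof.
rewrite coef_comp_poly.
under eq_bigr => j _ do rewrite exprZn coefZ coefXn eq_sym.
rewrite (eq_bigr (fun j : 'I_(size P) => if j == i :> nat then P`_j * a ^+ j else 0));
  last by move=> j _; case: eqP => _; rewrite ?mulr1 ?mulr0.
rewrite -big_mkcond /= (big_ord1_eq _ (fun j => P`_j * a ^+ j)) mulrC.
by case: ltnP => // /leq_sizeP ->; rewrite ?mulr0.
Qed.

Lemma psscale_poly a P : psscale a (ps_of_poly P) =1 ps_of_poly (P \Po (a *: 'X)).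
Proof. by move=> n; rewrite /ps_of_poly coef_comp_scaleX. Qed.

Lemma pssubst_pow_psexp d f :
  (0 < d)%N -> f 0%N = 0 -> pssubst_pow d (psexp f) =1 psexp (pssubst_pow d f).
Proof.
move=> d_gt0; apply: (psexp_comp (F := pssubst_pow d) (q := 'X^d)).
- by rewrite coefXn -(prednK d_gt0).
- exact: pssubst_pow_eq_upto.
- by move=> P; apply: pssubst_pow_poly.
Qed.

Lemma psscale_psexp a f : f 0%N = 0 -> psscale a (psexp f) =1 psexp (psscale a f).
Proof.
apply: (psexp_comp (F := psscale a) (q := a *: 'X)).
- by rewrite coefZ coefX mulr0.
- exact: psscale_eq_upto.
- exact: psscale_poly.
Qed.

Lemma psexp0 : psexp (fun=> 0) =1 ps1 K.
Proof.
move=> n; rewrite /psexp big_ord_recl big1 ?addr0 => [|m _].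
  by rewrite fact0 divr1.
by rewrite /pspow iterS /psmul big1 ?mul0r // => i _; rewrite mul0r.
Qed.

Hypothesis K_char0 : [pchar K] =i pred0.

Lemma exp_uptoD N P Q : P`_0 = 0 -> Q`_0 = 0 ->
  eq_upto N (ps_of_poly (exp_upto N (P + Q))) (ps_of_poly (exp_upto N P * exp_upto N Q)).
Proof.
move=> P0 Q0 i iN.
have nat_neq0 n : (0 < n)%N -> (n%:R : K) != 0 by rewrite ((pcharf0P K).1 K_char0) -lt0n.
pose c a b := ((a`!)%:R^-1 * (b`!)%:R^-1) * (P ^+ a * Q ^+ b)`_i : K.
rewrite /ps_of_poly /exp_upto big_distrl /= !coef_sum.
under [RHS]eq_bigr => a _ do rewrite big_distrr /= coef_sum.
transitivity (\sum_(m < N.+1) \sum_(j < m.+1) c (m - j)%N j).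
  (* binomial expansion of [(P + Q) ^+ m], with [m`! = 'C(m, j) * j`! * (m - j)`!] *)
  apply: eq_bigr => m _; rewrite exprDn scaler_sumr coef_sum.
  apply: eq_bigr => j _; rewrite coefZ coefMn /c -mulr_natl.
  have le_jm : (j <= m)%N by rewrite -ltnS.
  have -> : ((m`!)%:R : K) = ('C(m, j))%:R * ((j`!)%:R * ((m - j)`!)%:R).
    by rewrite -!natrM bin_fact.
  field; rewrite !nat_neq0 ?fact_gt0 ?bin_gt0 //.
rewrite sum_antidiagonals.
  apply: eq_bigr => a _; apply: eq_bigr => b _.
  by rewrite -scalerAl -scalerAr !coefZ /c mulrA.
(* [P ^+ a * Q ^+ b] is divisible by ['X^(a + b)] *)
move=> a b lt_N_ab; rewrite /c -(drop_polyMX P0) -(drop_polyMX Q0) !exprMn.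
rewrite mulrACA -exprD coefMXn ifT ?mulr0 //.
exact: leq_ltn_trans iN lt_N_ab.
Qed.

Lemma psexpD f g : f 0%N = 0 -> g 0%N = 0 ->
  psexp (fun n => f n + g n) =1 psmul (psexp f) (psexp g).
Proof.
move=> f0 g0 n; set P := ps_trunc n f; set Q := ps_trunc n g.
have fP := eq_upto_trunc (N:=n) f; have gQ := eq_upto_trunc (N:=n) g.
have P0 : P`_0 = 0 by rewrite -[LHS]fP.
have Q0 : Q`_0 = 0 by rewrite -[LHS]gQ.
have PQ0 : (P + Q)`_0 = 0 by rewrite coefD P0 Q0 addr0.
have fgPQ : eq_upto n (fun i => f i + g i) (ps_of_poly (P + Q)).
  by move=> i ni; rewrite fP // gQ // /ps_of_poly coefD.
have eP := eq_upto_trans (psexp_eq_upto fP) (psexp_poly (N:=n) P0).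
have eQ := eq_upto_trans (psexp_eq_upto gQ) (psexp_poly (N:=n) Q0).
rewrite (psexp_eq_upto fgPQ) // (psexp_poly (N:=n) PQ0) // exp_uptoD // -psmul_poly.
by symmetry; apply: psmul_eq_upto eP eQ n (leqnn n).
Qed.

Lemma psexp_sum J (F : nat -> pseries K) : (forall j, F j 0%N = 0) ->
  \big[@psmul K/ps1 K]_(j < J) psexp (F j) =1 psexp (fun n => \sum_(j < J) F j n).
Proof.
elim: J F => [|J IH] F F0 n.
  rewrite big_ord0 -psexp0; apply: psexp_eq_upto (leqnn n) => i _.
  by rewrite big_ord0.
rewrite big_ord_recl.
transitivity (psmul (psexp (F 0%N)) (psexp (fun n => \sum_(j < J) F j.+1 n)) n).
  by apply: eq_bigr => i _; rewrite -(IH (fun j => F j.+1)).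
rewrite -psexpD //; last by rewrite big1.
by apply: psexp_eq_upto (leqnn n) => i _; rewrite big_ord_recl.
Qed.

End PowerSeries.

Definition gamma_term (K : fieldType) (p : nat) (pi : K) (i : nat) : K :=
  pi ^+ (p ^ i) / (p ^ i)%:R.

Lemma gammaE (K : fieldType) (p : nat) (pi : K) j :
  gamma p pi j = \sum_(i < j.+1) gamma_term p pi i.
Proof. by []. Qed.

Section ThetaHat.
Variables (K : fieldType) (p k : nat) (pi : K).
Hypothesis p_prime : prime p.
Local Notation L := (logE K p k).
Local Notation a := (gamma_term p pi).

Lemma logE0 : L 0%N = 0.
Proof. by rewrite /logE big1 // => i _; rewrite ifF // eq_sym eqn0Ngt expn_gt0 prime_gt0. Qed.

Lemma coef_subst_log j n : pssubst_pow (p ^ j) (psscale pi L) n =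
  \sum_(i < k.+1) (if n == (p ^ (j + i))%N then a i else 0).
Proof.
have pj_gt0 : (0 < p ^ j)%N by rewrite expn_gt0 prime_gt0.
rewrite /pssubst_pow /psscale /logE; case: ifP => [pj_n|pj_n]; last first.
  rewrite big1 // => i _; rewrite ifF //.
  by apply: contraFF pj_n => /eqP->; rewrite expnD dvdn_mulr.
rewrite mulr_sumr; apply: eq_bigr => i _.
have -> : (n %/ p ^ j == p ^ i)%N = (n == p ^ (j + i))%N.
  by rewrite -[in RHS](divnK pj_n) expnD [in RHS]mulnC eqn_pmul2l.
case: eqP => [->|_]; last by rewrite mulr0.
by rewrite /gamma_term expnD mulKn.
Qed.

Hypothesis gamma_k_eq0 : gamma p pi k = 0.

Lemma sum_gamma_term_le t :
  \sum_(i < k.+1 | (i <= t)%N) a i = if (t < k)%N then gamma p pi t else 0.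
Proof.
case: ltnP => [tk|kt]; last first.
  rewrite -[RHS]gamma_k_eq0 gammaE big_mkcond; apply: eq_bigr => i _.
  by rewrite ifT // (leq_trans _ kt) // -ltnS.
by rewrite gammaE (big_ord_widen k.+1 a) // ltnW.
Qed.

Lemma coef_log_theta_hat J n : (n < p ^ J)%N ->
  \sum_(j < J) pssubst_pow (p ^ j) (psscale pi L) n =
  \sum_(j < k) (if n == (p ^ j)%N then gamma p pi j else 0).
Proof.
have p_gt1 := prime_gt1 p_prime.
move=> nJ; under eq_bigr => j _ do rewrite coef_subst_log.
case: (boolP (n == p ^ logn p n)%N) => [/eqP n_pow|n_npow]; last first.
  have n_neq e : (n == p ^ e)%N = false.
    by apply: contraNF n_npow => /eqP ->; rewrite pfactorK.
  rewrite big1 => [|j _]; last by rewrite big1 // => i _; rewrite n_neq.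
  by rewrite big1 // => j _; rewrite n_neq.
move: nJ; rewrite n_pow ltn_exp2l // => tJ.
under eq_bigr => j _ do under eq_bigr => i _ do rewrite eqn_exp2l //.
under [RHS]eq_bigr => j _ do rewrite eqn_exp2l // eq_sym.
rewrite exchange_big /=.
under eq_bigr => i _ do rewrite sum_if_eq_addn //.
by rewrite -big_mkcond sum_gamma_term_le -big_mkcond big_ord1_eq.
Qed.

Hypothesis K_char0 : [pchar K] =i pred0.

Lemma theta_hat_partialE J : theta_hat_partial p k pi J =1
  psexp (fun n => \sum_(j < J) pssubst_pow (p ^ j) (psscale pi L) n).
Proof.
have log0 j : pssubst_pow (p ^ j) (psscale pi L) 0%N = 0.
  by rewrite /pssubst_pow dvdn0 div0n /psscale logE0 mulr0.
pose F j := pssubst_pow (p ^ j) (psscale pi L).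
move=> n; rewrite -(@psexp_sum K K_char0 J F log0 n); move: n.
apply: (big_ind2 (fun f g : pseries K => f =1 g)) => // [f1 g1 f2 g2 e1 e2 n|j _ n].
  by apply: psmul_eq_upto (leqnn n) => i _; [apply: e1 | apply: e2].
have pj_gt0 : (0 < p ^ j)%N by rewrite expn_gt0 prime_gt0.
rewrite -pssubst_pow_psexp //; last by rewrite /psscale logE0 mulr0.
apply: pssubst_pow_eq_upto (leqnn n) => i _.
by apply: psscale_psexp; apply: logE0.
Qed.

End ThetaHat.

Section Valuation.
Variables (K : fieldType) (p : nat) (ord : K -> rat).
Hypothesis hord : is_ord_p p ord.

Lemma ordM x y : x != 0 -> y != 0 -> ord (x * y) = ord x + ord y.
Proof. by case: hord => mulM _ _; apply: mulM. Qed.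

Lemma ord_one : ord 1 = 0.
Proof. by have := ordM (oner_neq0 K) (oner_neq0 K); rewrite mulr1; lra. Qed.

Lemma ordN x : x != 0 -> ord (- x) = ord x.
Proof.
have N1_neq0 : (-1 : K) != 0 by rewrite oppr_eq0 oner_neq0.
have ordN1 : ord (-1) = 0 by have := ordM N1_neq0 N1_neq0; rewrite mulrNN mulr1 ord_one; lra.
by move=> x_neq0; rewrite -mulN1r ordM // ordN1 add0r.
Qed.

Lemma ordX x n : x != 0 -> ord (x ^+ n) = n%:R * ord x.
Proof.
move=> x_neq0; elim: n => [|n IH]; first by rewrite expr0 ord_one mul0r.
by rewrite exprS ordM ?expf_neq0 // IH -[n.+1]addn1 natrD; ring.
Qed.

Lemma ordV x : x != 0 -> ord x^-1 = - ord x.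
Proof.
by move=> x_neq0; have := ordM x_neq0 (invr_neq0 x_neq0); rewrite mulfV // ord_one; lra.
Qed.

Lemma ordD_lt x y : x != 0 -> y != 0 -> ord x < ord y ->
  x + y != 0 /\ ord (x + y) = ord x.
Proof.
move=> x_neq0 y_neq0 lt_xy; have [_ ord_add _] := hord.
have xy_neq0 : x + y != 0.
  by apply: contraTneq lt_xy => /(canRL (addrK y)); rewrite sub0r => ->; rewrite ordN // ltxx.
split=> //.
have Ny_neq0 : - y != 0 by rewrite oppr_eq0.
have := ord_add _ _ xy_neq0 Ny_neq0; rewrite addrK => /(_ x_neq0).
have := ord_add _ _ x_neq0 y_neq0 xy_neq0.
by rewrite !ge_min ordN // => /orP[] h1 /orP[] h2; lra.
Qed.

Lemma ord_natX i : (p%:R : K) != 0 -> ord (p ^ i)%:R = i%:R.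
Proof. by have [_ _ ord_p1] := hord; move=> p_neq0; rewrite natrX ordX // ord_p1 mulr1. Qed.

End Valuation.

Section GammaValuation.
Variables (K : fieldType) (ord : K -> rat) (p k : nat) (pi : K).
Hypotheses (K_char0 : [pchar K] =i pred0) (hord : is_ord_p p ord) (p_prime : prime p).
Hypotheses (pi_neq0 : pi != 0) (ord_pi : ord pi = ((p ^ (k - 1) * (p - 1))%:R)^-1).
Local Notation a := (gamma_term p pi).

Lemma natr_pX_neq0 i : ((p ^ i)%:R : K) != 0.
Proof. by rewrite ((pcharf0P K).1 K_char0) -lt0n expn_gt0 prime_gt0. Qed.

Lemma gamma_term_neq0 i : a i != 0.
Proof. by rewrite mulf_neq0 ?expf_neq0 ?invr_neq0 ?natr_pX_neq0. Qed.

Lemma ord_gamma_term j : (j < k)%N ->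
  ord (a j) = ((p ^ (k - 1 - j) * (p - 1))%:R)^-1 - j%:R.
Proof.
move=> jk; have p_neq0 := natr_pX_neq0 1; rewrite expn1 in p_neq0.
rewrite (ordM hord) ?expf_neq0 ?invr_neq0 ?natr_pX_neq0 // (ordX hord) //.
rewrite (ordV hord) ?natr_pX_neq0 // (ord_natX hord) // ord_pi.
have -> : (p ^ (k - 1) = p ^ j * p ^ (k - 1 - j))%N by rewrite -expnD; congr expn; lia.
rewrite !natrM.
have nat_neq0 n : (0 < n)%N -> (n%:R : rat) != 0 by rewrite pnatr_eq0 -lt0n.
by field; rewrite !nat_neq0 ?expn_gt0 ?subn_gt0 ?prime_gt0 ?prime_gt1.
Qed.

Lemma ord_gamma_term_decr j : (j.+1 < k)%N -> ord (a j.+1) < ord (a j).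
Proof.
move=> jk; rewrite ord_gamma_term // ord_gamma_term ?(ltnW jk) //.
have -> : (k - 1 - j = (k - 1 - j.+1).+1)%N by lia.
rewrite expnS -mulnA !natrM natrB ?prime_gt0 // -[j.+1]addn1 natrD.
set P := (p%:R : rat); set V := ((p ^ _)%:R : rat).
have P_gt1 : 1 < P by rewrite ltr1n prime_gt1.
have V_ge1 : 1 <= V by rewrite ler1n expn_gt0 prime_gt0.
(* the valuations of consecutive terms differ by [1 - 1 / (p V)] *)
have gap : (V * (P - 1))^-1 - (P * (V * (P - 1)))^-1 = (P * V)^-1.
  by field; apply/and3P; split; apply/negP => /eqP; lra.
have : (P * V)^-1 < 1 by rewrite invf_lt1; nra.
lra.
Qed.

Lemma gamma_neq0_ord j : (j < k)%N ->
  gamma p pi j != 0 /\ ord (gamma p pi j) = ord (a j).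
Proof.
elim: j => [|j IH] jk; first by rewrite gammaE big_ord1; split; [apply: gamma_term_neq0|].
have [g_neq0 ord_g] := IH (ltnW jk).
rewrite gammaE big_ord_recr /= -gammaE addrC.
apply: (ordD_lt hord) => //; first exact: gamma_term_neq0.
by rewrite ord_g ord_gamma_term_decr.
Qed.

End GammaValuation.

Theorem mainTheorem6 (K : closedFieldType) (ord : K -> rat) (p m k : nat) (pi : K) :
  [pchar K] =i pred0 -> is_ord_p p ord ->
  prime p -> (1 <= m)%N -> (m < p)%N -> (1 <= k <= m)%N ->
  pi != 0 ->
  \sum_(i < k.+1) pi ^+ (p ^ i) / (p ^ i)%:R = 0 ->
  ord pi = ((p ^ (k - 1) * (p - 1))%:R)^-1 ->
  xadic_limit (theta_hat_partial p k pi)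
    (psexp (fun n => \sum_(j < k) (if n == (p ^ j)%N then gamma p pi j else 0)))
  /\ (forall j, (j < k)%N ->
        gamma p pi j != 0 /\
        ord (gamma p pi j) = ((p ^ (k - 1 - j) * (p - 1))%:R)^-1 - j%:R).
Proof.
move=> K_char0 hord p_prime _ _ _ pi_neq0 gamma_k_eq0 ord_pi; split.
  move=> N; exists N => J NJ n nN.
  rewrite theta_hat_partialE //; apply: psexp_eq_upto nN => i iN.
  apply: coef_log_theta_hat => //; apply: (leq_ltn_trans iN).
  exact: leq_trans (ltn_expl N (prime_gt1 p_prime)) (leq_pexp2l (prime_gt0 p_prime) NJ).
move=> j jk; have [gamma_neq0 ->] := gamma_neq0_ord K_char0 hord p_prime pi_neq0 ord_pi jk.
by split; last exact: ord_gamma_term.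
Qed.
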